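(* Let $r\ge 2$ and $n\ge 3$. Let $W_n$ be the word over $\{H,v\}$ obtained from the Christoffel word of $\mathcal{C}_n$ by replacing every $E$ with $H$ and every $N$ with $v$ (this is the word encoding the pair consisting of all horizontal edges and no vertical edges of $\mathcal{C}_n$). Then $$w_q(W_n)=c_{n-1}+c_{n-2}-1.$$
   Context: Fix an integer $r\ge 2$. Define $c_1=0$, $c_2=1$, $c_n=rc_{n-1}-c_{n-2}$ for $n\ge 3$. For nonnegative integers $a,b$, the maximal Dyck path $\mathcal{P}(a,b)$ is the lattice path from $(0,0)$ to $(a,b)$ using unit north and east steps that never passes strictly above the line segment from $(0,0)$ to $(a,b)$ and is closest to that segment. For $n\ge 3$ let $\mathcal{C}_n=\mathcal{P}(c_{n-1},c_{n-2})$; its Christoffel word is the word over $\{E,N\}$ recording its steps in order ($E$ for east, $N$ for north). On the alphabet $A=\{h,v,H,V\}$ define $w_q$ on two-letter words by $w_q(hv)=w_q(Hv)=w_q(hV)=1$, $w_q(Hh)=w_q(vV)=r$, $w_q(VH)=r^2-1$, and $w_q(yx)=-w_q(xy)$ for all $x,y\in A$ (so $w_q(xx)=0$). For a word $W=W_1W_2\cdots W_\ell$ over $A$, set $w_q(W)=\sum_{1\le i<j\le \ell}w_q(W_iW_j)$. *)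

From mathcomp Require Import all_boot all_order all_algebra.
Set Implicit Arguments. Unset Strict Implicit. Unset Printing Implicit Defensive.
Import GRing.Theory Num.Theory.
Local Open Scope ring_scope.

(* The sequence c_n (indexed from 1; c 0 is an unused dummy value):
   c_1 = 0, c_2 = 1, c_n = r c_{n-1} - c_{n-2}. *)
Fixpoint cpair (r : int) (n : nat) : int * int :=
  (* cpair r n = (c_{n+1}, c_{n+2}) *)
  match n with
  | 0%N => (0, 1)
  | m.+1 => let p := cpair r m in (p.2, r * p.2 - p.1)
  end.
Definition cseq (r : int) (n : nat) : int := (cpair r n.-1).1.

Inductive step := E | N.
Definition step_eqb (x y : step) : bool :=
  match x, y with E, E | N, N => true | _, _ => false end.
Definition isE (s : step) : bool := if s is E then true else false.
Definition isN (s : step) : bool := if s is N then true else false.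

Definition dyck_below (a b : nat) (w : seq step) : Prop :=
  count isE w = a /\ count isN w = b /\
  forall k : nat, (count isN (take k w) * a <= count isE (take k w) * b)%N.

Definition maximal_dyck (a b : nat) (w : seq step) : Prop :=
  dyck_below a b w /\
  forall w' : seq step, dyck_below a b w' ->
    forall k : nat, (count isN (take k w') <= count isN (take k w))%N.

Inductive letter := lh | lv | lH | lV.

Definition wq2 (r : int) (x y : letter) : int :=
  match x, y with
  | lh, lv => 1 | lv, lh => -1
  | lH, lv => 1 | lv, lH => -1
  | lh, lV => 1 | lV, lh => -1
  | lH, lh => r | lh, lH => - r
  | lv, lV => r | lV, lv => - r
  | lV, lH => r ^+ 2 - 1 | lH, lV => - (r ^+ 2 - 1)
  | _, _ => 0
  end.

Definition wq (r : int) (W : seq letter) : int :=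
  \sum_(0 <= j < size W) \sum_(0 <= i < j) wq2 r (nth lh W i) (nth lh W j).

Definition HvOfStep (s : step) : letter := if s is E then lH else lv.

From mathcomp Require Import all_boot all_order all_algebra.
From mathcomp Require Import zify ring.
Import Order.TTheory GRing.Theory Num.Theory.

(* Write a = c_(n-1), b = c_(n-2) and m = a + b.  The recurrence preserves
   c_k^2 - r c_k c_(k+1) + c_(k+1)^2 = 1, so a and b are coprime.  The maximal
   Dyck path P(a, b) has height floor(k b / m) after k steps.  In a word over
   {H, v}, w_q is the number of pairs H..v minus the number of pairs v..H,
   which is (m - 1) b - 2 * (sum of the heights); pairing j with m - j shows
   2 * sum_(j < m) floor(j b / m) = (m - 1)(b - 1) for coprime b and m, hence
   w_q = m - 1. *)

Lemma coprime_add_gt0 {a b} : coprime a b -> 0 < a + b.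
Proof. by case: a b => [|a] [|b]. Qed.

Lemma coprime_quadratic (a b c : nat) : a * a + b * b = 1 + c * a * b -> coprime a b.
Proof.
move=> eq_ab; rewrite /coprime -dvdn1.
have dvd_cab : gcdn a b %| c * a * b by rewrite dvdn_mull // dvdn_gcdr.
have : gcdn a b %| 1 + c * a * b.
  by rewrite -eq_ab dvdn_add // dvdn_mull // ?dvdn_gcdl ?dvdn_gcdr.
by rewrite (dvdn_addl 1 dvd_cab).
Qed.

Lemma divn_mul_add_compl m b j : coprime b m -> 0 < j < m ->
  (j * b) %/ m + ((m - j) * b) %/ m + 1 = b.
Proof.
move=> co_bm /andP [j_gt0 lt_jm].
have m_gt0 : 0 < m by lia.
have ndvd : ~~ (m %| j * b).
  rewrite Gauss_dvdl; last by rewrite coprime_sym.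
  by apply/negP => /dvdn_leq; lia.
have rem_gt0 : 0 < (j * b) %% m by rewrite lt0n; move: ndvd; rewrite /dvdn.
have rem_lt : (j * b) %% m < m by rewrite ltn_mod.
have eq_jb := divn_eq (j * b) m.
set q := (j * b) %/ m in eq_jb *; set rem := (j * b) %% m in eq_jb rem_gt0 rem_lt *.
have lt_qb : q < b by rewrite -(ltn_pmul2r m_gt0); nia.
have -> : (m - j) * b = (b - q - 1) * m + (m - rem) by nia.
rewrite divnMDl // divn_small; lia.
Qed.

(* Stated without (b - 1), which would be truncated when b = 0 and m = 1. *)
Lemma sum_divn_mul_coprime m b : coprime b m ->
  2 * (\sum_(0 <= j < m) (j * b) %/ m) + (m - 1) = (m - 1) * b.
Proof.
move=> co_bm; have [-> | m_gt0] := posnP m; first by rewrite big_geq.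
set S := \sum_(0 <= j < m) _.
have shift : S + b = \sum_(0 <= j < m) (j.+1 * b) %/ m.
  have := big_nat_recr m 0 (fun j => (j * b) %/ m) (leq0n m)
    : \sum_(0 <= j < m.+1) _ = _ + _.
  by rewrite big_nat_recl // mul0n div0n add0n mulKn // => ->.
have rev : \sum_(0 <= j < m) (j.+1 * b) %/ m = \sum_(0 <= j < m) ((m - j) * b) %/ m.
  rewrite big_nat_rev /=; apply: eq_big_nat => j /andP [_ lt_jm].
  by congr (_ %/ _); congr (_ * _); lia.
have pairs : \sum_(0 <= j < m) ((j * b) %/ m + ((m - j) * b) %/ m + 1) = m * b + 1.
  rewrite big_ltn // mul0n div0n subn0 mulKn // add0n.
  rewrite (eq_big_nat _ _ (F2 := fun _ => b)) ?sum_nat_const_nat; first by nia.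
  by move=> j lt_j; apply: divn_mul_add_compl => //; lia.
rewrite !big_split /= sum_nat_const_nat -/S -rev -shift in pairs; nia.
Qed.

Lemma count_isE_isN (w : seq step) : count isE w + count isN w = size w.
Proof. by elim: w => [|[] w IH] //=; rewrite -IH; lia. Qed.

Lemma dyck_below_size {a b w} : dyck_below a b w -> size w = a + b.
Proof. by case=> [cE [cN _]]; rewrite -count_isE_isN cE cN. Qed.

Section FloorPath.

Variables a b : nat.
Hypothesis ab_gt0 : 0 < a + b.
Local Notation m := (a + b).

Definition floor_path : seq step :=
  [seq if (j * b) %/ m < (j.+1 * b) %/ m then N else E | j <- iota 0 m].

Lemma count_isN_take_floor_path k :
  count isN (take k floor_path) = (minn k m * b) %/ m.
Proof.
rewrite -map_take take_iota; elim: (minn k m) => [|j IH]; first by rewrite div0n.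
have le_step : (j * b) %/ m <= (j.+1 * b) %/ m <= ((j * b) %/ m).+1.
  rewrite leq_div2r ?leq_mul2r ?leqnSn ?orbT //=.
  rewrite -ltnS ltn_divLR // mulSn; nia.
rewrite -addn1 iotaD map_cat count_cat IH /= addn0 add0n addn1.
by move: le_step; case: ltnP => /=; lia.
Qed.

Lemma dyck_below_count_isN_take w k : dyck_below a b w ->
  count isN (take k w) <= (minn k m * b) %/ m.
Proof.
move=> dw; have [_ [_ below]] := dw.
have := count_isE_isN (take k w); rewrite size_take (dyck_below_size dw).
move=> sizek; rewrite leq_divRL // -[minn k m]/(if k < m then k else m) -sizek.
by rewrite mulnDr mulnDl leq_add2r below.
Qed.

Lemma dyck_below_floor_path : dyck_below a b floor_path.
Proof.
have size_fp : size floor_path = m by rewrite size_map size_iota.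
have cN : count isN floor_path = b.
  by rewrite -[floor_path]take_size count_isN_take_floor_path size_fp minnn mulKn.
split; last split => //.
  by have := count_isE_isN floor_path; rewrite cN size_fp; lia.
move=> k; have := count_isE_isN (take k floor_path).
rewrite size_take size_fp count_isN_take_floor_path -/(minn k m).
have := leq_divM (minn k m * b) m.
have : (minn k m * b) %/ m <= minn k m.
  by rewrite -{2}(mulnK (minn k m) ab_gt0) leq_div2r // leq_mul2l leq_addl orbT.
nia.
Qed.

Lemma maximal_dyck_floor_path : maximal_dyck a b floor_path.
Proof.
split; first exact: dyck_below_floor_path.
by move=> w' dw' k; rewrite count_isN_take_floor_path dyck_below_count_isN_take.
Qed.

Lemma maximal_dyck_count_isN_take w k : maximal_dyck a b w ->
  count isN (take k w) = (minn k m * b) %/ m.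
Proof.
move=> [dw maxw]; apply/eqP; rewrite eqn_leq dyck_below_count_isN_take //=.
by rewrite -count_isN_take_floor_path; apply: maxw; exact: dyck_below_floor_path.
Qed.

End FloorPath.

Local Open Scope ring_scope.

Lemma wq_rcons r W x : wq r (rcons W x) = wq r W + \sum_(y <- W) wq2 r y x.
Proof.
rewrite /wq size_rcons big_nat_recr //= nth_rcons ltnn eqxx (big_nth lh); congr (_ + _).
  apply: eq_big_nat => j /andP [_ lt_jW]; rewrite nth_rcons lt_jW.
  by apply: eq_big_nat => i /andP [_ lt_ij]; rewrite nth_rcons (ltn_trans lt_ij lt_jW).
by apply: eq_big_nat => i /andP [_ lt_iW]; rewrite nth_rcons lt_iW.
Qed.

Lemma sum_wq2_HvOfStep r (w : seq step) x :
  \sum_(s <- w) wq2 r (HvOfStep s) (HvOfStep x) =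
  if x is N then (count isE w)%:Z else - (count isN w)%:Z.
Proof.
elim: w => [|s w IH]; first by rewrite big_nil; case: x.
by rewrite big_cons IH; move: IH; case: s; case: x => /= _; lia.
Qed.

Lemma wq_map_HvOfStep r (w : seq step) :
  wq r (map HvOfStep w) = ((size w)%:Z - 1) * (count isN w)%:Z
    - 2 * (\sum_(0 <= k < size w) count isN (take k w))%N%:Z.
Proof.
elim/last_ind: w => [|w x IH]; first by rewrite /wq !big_geq.
have cE := count_isE_isN w.
rewrite map_rcons wq_rcons IH big_map sum_wq2_HvOfStep size_rcons big_nat_recr //=.
rewrite -cats1 take_size_cat //.
have -> : (\sum_(0 <= k < size w) count isN (take k (w ++ [:: x])) =
           \sum_(0 <= k < size w) count isN (take k w))%N.
  by apply: eq_big_nat => k /andP [_ lt_kw]; rewrite takel_cat // ltnW.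
rewrite count_cat; case: x cE => /= cE; lia.
Qed.

Lemma wq_maximal_dyck r {a b w} : coprime a b -> maximal_dyck a b w ->
  wq r (map HvOfStep w) = (a + b)%:Z - 1.
Proof.
move=> co_ab maxw; have ab_gt0 := coprime_add_gt0 co_ab.
have co_b_ab : coprime b (a + b) by rewrite /coprime gcdnDr gcdnC.
have [[_ [cN _]] _] := maxw.
have heights : (\sum_(0 <= k < a + b) count isN (take k w) =
                \sum_(0 <= k < a + b) (k * b) %/ (a + b))%N.
  apply: eq_big_nat => k /andP [_ lt_k].
  by rewrite (@maximal_dyck_count_isN_take a b ab_gt0 w k maxw) (minn_idPl (ltnW lt_k)).
have := @sum_divn_mul_coprime (a + b) b co_b_ab.
rewrite wq_map_HvOfStep (dyck_below_size maxw.1) cN heights; nia.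
Qed.

Lemma cpair_invariant r k :
  (cpair r k).1 ^+ 2 - r * (cpair r k).1 * (cpair r k).2 + (cpair r k).2 ^+ 2 = 1.
Proof. by elim: k => [|k IH] /=; [ring | rewrite -IH; ring]. Qed.

Lemma cpair_ge0_le r k : 2 <= r -> 0 <= (cpair r k).1 <= (cpair r k).2.
Proof. by move=> r_ge2; elim: k => [|k /andP [IH1 IH2]] //=; apply/andP; split; nia. Qed.

Lemma coprime_abs_cpair r k : 2 <= r -> coprime `|(cpair r k).2| `|(cpair r k).1|.
Proof.
move=> r_ge2; have /andP [ge0_1 le_12] := cpair_ge0_le r k r_ge2.
apply: (@coprime_quadratic _ _ `|r|); apply/eqP; rewrite -eqz_nat !PoszD !PoszM.
rewrite !gez0_abs ?(le_trans ge0_1 le_12) ?(le_trans _ r_ge2) //.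
have := cpair_invariant r k; rewrite !expr2 => inv.
by apply/eqP; rewrite -[1%Z]inv; ring.
Qed.

Theorem mainTheorem4 (r : int) (n : nat) (hr : 2 <= r) (hn : (3 <= n)%N) :
  (0 <= cseq r n.-1) /\ (0 <= cseq r n.-2) /\
  (exists w : seq step,
      maximal_dyck `|cseq r n.-1|%N `|cseq r n.-2|%N w) /\
  (forall w : seq step,
      maximal_dyck `|cseq r n.-1|%N `|cseq r n.-2|%N w ->
      wq r (map HvOfStep w) = cseq r n.-1 + cseq r n.-2 - 1).
Proof.
case: n hn => [|[|[|k]]] // _; rewrite /cseq /=.
have /andP [ge0_1 le_12] := cpair_ge0_le r k hr.
have ge0_2 := le_trans ge0_1 le_12.
have co := coprime_abs_cpair r k hr.
split=> //; split=> //; split.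
  by exists (floor_path `|(cpair r k).2| `|(cpair r k).1|);
     apply/maximal_dyck_floor_path/coprime_add_gt0.
move=> w maxw; rewrite (wq_maximal_dyck r co maxw) PoszD !gez0_abs //.
Qed.
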